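(* Let $n\geq 2$ be an integer, and for real $x$ let $\omega=\frac{x+\sqrt{x^2+4}}{2}$. Then $$\Psi_n(x)=\begin{cases}-\dfrac{\Phi_n(-\omega^2)}{\omega^{\varphi(n)}}&\text{if } n=2;\\[2ex] \dfrac{\Phi_n(-\omega^2)}{\omega^{\varphi(n)}}&\text{if } n\geq 3.\end{cases}$$ Equivalently, since $\omega-\omega^{-1}=x$, $\Psi_n(\omega-\omega^{-1})$ equals the right-hand side.
   Context: The Fibonacci polynomials are defined by $F_1(x)=1$, $F_2(x)=x$, and $F_n(x)=xF_{n-1}(x)+F_{n-2}(x)$ for $n\geq 3$. For $n\geq 2$, the $n$-th fibotomic polynomial $\Psi_n(x)\in\mathbb{Z}[x]$ is the product of the monic irreducible factors of $F_n(x)$ which are not factors of $F_k(x)$ for any $k<n$; also $\Psi_1(x)=1$. Thus $F_n(x)=\prod_{d\mid n}\Psi_d(x)$ for all $n\geq1$. $\Phi_n(x)$ denotes the $n$-th cyclotomic polynomial and $\varphi$ is Euler's totient function. *)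

From HB Require Import structures.
From mathcomp Require Import all_boot all_order all_algebra all_field.
Set Implicit Arguments. Unset Strict Implicit. Unset Printing Implicit Defensive.
Import Order.TTheory GRing.Theory Num.Theory.
Local Open Scope ring_scope.

(* Fibonacci polynomials over Q: F_0 = 0, F_1 = 1, F_(n+2) = X F_(n+1) + F_n.
   (So F_1 = 1, F_2 = X as in the paper.) *)
Fixpoint fibp_pair (n : nat) : {poly rat} * {poly rat} :=
  match n with
  | 0 => (0, 1)
  | m.+1 => let: (a, b) := fibp_pair m in (b, 'X * b + a)
  end.
Definition fibp (n : nat) : {poly rat} := (fibp_pair n).1.

(* p is the n-th fibotomic polynomial: p is the product of the (distinct)
   monic irreducible factors (over Q) of F_n that do not divide any F_k, 1<=k<n.
   Being such a product is expressed as: p is monic, squarefree, and its monic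
   irreducible divisors are exactly those factors. *)
Definition is_fibotomic (n : nat) (p : {poly rat}) : Prop :=
  [/\ p \is monic,
      (forall q : {poly rat}, irreducible_poly q -> ~~ (q ^+ 2 %| p)) &
      (forall q : {poly rat}, q \is monic -> irreducible_poly q ->
         (q %| p) = (q %| fibp n) && [forall k : 'I_n, (0 < val k)%N ==> ~~ (q %| fibp k)])].

(* Write F_n for the Fibonacci polynomials over Q and, for x = w - w^-1 (w <> 0),
   use Binet's formula F_n(x) (w + w^-1) = w^n - (-w^-1)^n.

   The addition formula gives the strong divisibility
   gcd(F_m, F_n) ~ F_(gcd m n), and Cassini's identity together with a formula
   for the derivative shows that every F_n (n > 0) is separable.

   Define Psi_n recursively by F_n / prod_(1<d<n, d|n) Psi_d.
   By strong induction F_n = prod_(1<d, d|n) Psi_d and Psi_n is coprime to every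
   F_k with 0 < k < n; squarefreeness of F_n then shows that Psi_n is the unique
   fibotomic polynomial (a monic squarefree polynomial is determined by its monic
   irreducible factors).

   Over a real closed field every x is w - w^-1 with
   w = (x + sqrt(x^2 + 4))/2.  Binet's formula and the cyclotomic factorization of
   y^n - 1 at y = -w^2 show that F_n(w - w^-1) is the product over 1 < d | n of the
   right-hand sides of the theorem.  Peeling off the proper divisors by induction
   needs a cancellation, done by viewing both sides as polynomials in w. *)

From HB Require Import structures.
From mathcomp Require Import all_boot all_order all_algebra all_field.
From mathcomp Require Import cyclic ring lra.
From Stdlib Require Import Classical.
Set Implicit Arguments. Unset Strict Implicit. Unset Printing Implicit Defensive.
Import Order.TTheory GRing.Theory Num.Theory.
Local Open Scope ring_scope.

Lemma fibp_pairE n : fibp_pair n = (fibp n, fibp n.+1).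
Proof. by elim: n => [//|n IH]; rewrite /= IH /fibp /= IH. Qed.

Lemma fibp0 : fibp 0 = 0. Proof. by []. Qed.
Lemma fibp1 : fibp 1 = 1. Proof. by []. Qed.
Lemma fibpSS n : fibp n.+2 = 'X * fibp n.+1 + fibp n.
Proof. by rewrite {1}/fibp /= fibp_pairE. Qed.

Lemma fibp_add m n : fibp (m + n).+1 = fibp m.+1 * fibp n.+1 + fibp m * fibp n.
Proof.
elim: m n => [|m IH] n; first by rewrite add0n fibp1 fibp0 mul1r mul0r addr0.
by rewrite addSnnS IH !fibpSS; ring.
Qed.

Definition lucasp n : {poly rat} := 2%:R * fibp n.+1 - 'X * fibp n.

Lemma cassini n : lucasp n ^+ 2 - ('X ^+ 2 + 4%:R) * fibp n ^+ 2 = (4 * (-1) ^+ n)%:P.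
Proof.
have cassini0 : fibp n.+1 ^+ 2 - 'X * fibp n.+1 * fibp n - fibp n ^+ 2 = (-1) ^+ n.
  elim: n => [|n IH]; first by rewrite fibp1 fibp0 expr0; ring.
  by rewrite fibpSS [in RHS]exprS -IH; ring.
by rewrite polyCM rmorphXn rmorphN1 -cassini0 /lucasp; ring.
Qed.

Lemma fibp_deriv n :
  ('X ^+ 2 + 4%:R) * (fibp n)^`() = n%:R * lucasp n - 'X * fibp n.
Proof.
suff /(_ n)[] : forall n, ('X ^+ 2 + 4%:R) * (fibp n)^`() = n%:R * lucasp n - 'X * fibp n /\
   ('X ^+ 2 + 4%:R) * (fibp n.+1)^`() = n.+1%:R * lucasp n.+1 - 'X * fibp n.+1 by [].
elim=> [|m [IH1 IH2]]; first by rewrite /lucasp fibpSS fibp1 fibp0 !deriv0 derivC; split; ring.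
split=> //.
have -> : ('X ^+ 2 + 4%:R) * (fibp m.+2)^`() =
   ('X ^+ 2 + 4%:R) * fibp m.+1 + 'X * (('X ^+ 2 + 4%:R) * (fibp m.+1)^`())
   + ('X ^+ 2 + 4%:R) * (fibp m)^`() by rewrite fibpSS derivD derivM derivX; ring.
rewrite IH1 IH2 /lucasp !fibpSS -[m.+2]addn2 -[m.+1]addn1 !natrD; ring.
Qed.

(* F_n is squarefree: a common factor of F_n and F_n' divides L_n (by fibp_deriv),
   hence the constant of Cassini's identity. *)
Lemma separable_fibp n : (0 < n)%N -> separable_poly (fibp n).
Proof.
move=> n0.
have coFL : coprimep (fibp n) (lucasp n).
  apply/coprimepP => d dF dL.
  have : d %| (4 * (-1) ^+ n)%:P.
    by rewrite -cassini dvdp_sub // ?dvdp_mull // expr2 dvdp_mull.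
  rewrite -[_%:P]mulr1 mul_polyC dvdpZr ?dvdp1 ?size_poly_eq1 //.
  by rewrite mulf_neq0 ?signr_eq0.
have : coprimep (fibp n) (('X ^+ 2 + 4%:R) * (fibp n)^`()).
  rewrite fibp_deriv addrC -mulNr coprimep_addl_mul -polyC_natr mul_polyC coprimepZr //.
  by rewrite pnatr_eq0 -lt0n.
by rewrite separable_poly.unlock coprimepMr => /andP[].
Qed.

Lemma coprimep_fibpS n : coprimep (fibp n.+1) (fibp n).
Proof.
elim: n => [|n IH]; first by rewrite fibp1 coprime1p.
by rewrite fibpSS coprimep_sym coprimep_addl_mul.
Qed.

Lemma dvdp_fibp_add (G : {poly rat}) a b :
  G %| fibp b -> (G %| fibp (a + b)) = (G %| fibp a).
Proof.
case: b => [|b] Gb; first by rewrite addn0.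
have coGb : coprimep G (fibp b).
  by rewrite coprimep_sym (coprimep_dvdl Gb) // coprimep_sym coprimep_fibpS.
by rewrite addnS fibp_add (dvdp_addr _ (dvdp_mull _ Gb)) Gauss_dvdpl.
Qed.

Lemma dvdp_fibp_mod (G : {poly rat}) m n :
  G %| fibp m -> (G %| fibp n) = (G %| fibp (n %% m)).
Proof.
move=> Gm; rewrite {1}(divn_eq n m) addnC.
by elim: (n %/ m)%N => [|q IH]; rewrite ?mul0n ?addn0 // mulSnr addnA dvdp_fibp_add.
Qed.

(* Strong divisibility, by Euclid's algorithm on the indices. *)
Lemma dvdp_fibp_gcd (G : {poly rat}) m n :
  G %| fibp m -> G %| fibp n -> G %| fibp (gcdn m n).
Proof.
elim/ltn_ind: m n => -[|m] IH n Gm Gn; first by rewrite gcd0n.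
rewrite gcdnE /= IH ?ltn_pmod // -(dvdp_fibp_mod _ Gm) //.
Qed.

Lemma dvdp_fibp d n : (d %| n)%N -> fibp d %| fibp n.
Proof. by move=> dn; rewrite (dvdp_fibp_mod _ (dvdpp _)) (eqP dn) dvdp0. Qed.

Lemma fibp_size_monic n : size (fibp n.+1) = n.+1 /\ fibp n.+1 \is monic.
Proof.
elim/ltn_ind: n => -[|[|n]] IH.
- by rewrite fibp1 size_poly1 monic1.
- by rewrite fibpSS fibp1 fibp0 mulr1 addr0 size_polyX monicX.
have [s1 m1] := IH n.+1 (ltnSn _); have [s0 _] := IH n (ltnW (ltnSn _)).
have sX : size ('X * fibp n.+2) = n.+3.
  by rewrite mulrC size_mulX ?s1 // -size_poly_eq0 s1.
have lt : (size (fibp n.+1) < size ('X * fibp n.+2)%R)%N by rewrite sX s0.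
rewrite fibpSS size_polyDl // sX monicE lead_coefDl // mulrC lead_coefMX.
by rewrite (monicP m1).
Qed.

Lemma monic_fibp n : (0 < n)%N -> fibp n \is monic.
Proof. by case: n => // n _; case: (fibp_size_monic n). Qed.

Section IrreducibleFactors.
Variable F : fieldType.
Implicit Types p q r : {poly F}.

Lemma irredp_size_neq1 q : irreducible_poly q -> size q != 1%N.
Proof. by case=> q1 _; rewrite gtn_eqF. Qed.

Lemma irredp_dvd_of_not_coprime q p :
  irreducible_poly q -> ~~ coprimep q p -> q %| p.
Proof.
move=> irq; rewrite coprimep_def => ncop.
by rewrite -(eqp_dvdl _ (irq _ ncop (dvdp_gcdl q p))) dvdp_gcdr.
Qed.

Lemma exists_irredp_dvd p : (1 < size p)%N -> exists2 q, irreducible_poly q & q %| p.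
Proof.
have [s] := ubnP (size p); elim: s p => // s IH p /ltnSE sps p1.
have [irp | nirp] := classic (irreducible_poly p); first by exists p.
have [q [sq1 qp nqp]] : exists q, [/\ size q != 1%N, q %| p & ~~ (q %= p)].
  apply: NNPP => none; apply: nirp; split=> // q sq1 qp.
  by apply/negPn/negP => nqp; apply: none; exists q.
have p0 : p != 0 by rewrite -size_poly_gt0 ltnW.
have q0 : q != 0 by apply: contraTneq qp => ->; rewrite dvd0p.
have ltqp : (size q < size p)%N by rewrite ltn_neqAle dvdp_leq // dvdp_size_eqp // nqp.
have [|r irr rq] := IH q (leq_trans ltqp sps).
  by rewrite ltn_neqAle eq_sym sq1 size_poly_gt0.
by exists r; last exact: dvdp_trans rq qp.
Qed.

Lemma monic_irredp_assoc q : irreducible_poly q ->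
  exists2 m, m \is monic & (irreducible_poly m /\ m %= q).
Proof.
move=> irq; have lq : lead_coef q != 0 by rewrite lead_coef_eq0 irredp_neq0.
have mq : (lead_coef q)^-1 *: q %= q by rewrite eqp_scale // invr_eq0.
exists ((lead_coef q)^-1 *: q); first by rewrite monicE lead_coefZ mulVf.
split=> //; split; first by rewrite size_scale ?invr_eq0 //; case: irq.
move=> r sr; rewrite (eqp_dvdr _ mq) => rq.
by rewrite eqp_sym (eqp_trans mq) // eqp_sym irq.
Qed.

Lemma dvdp_squarefree p p' : p != 0 ->
  (forall q, irreducible_poly q -> ~~ (q ^+ 2 %| p)) ->
  (forall q, irreducible_poly q -> q %| p -> q %| p') -> p %| p'.
Proof.
have [s] := ubnP (size p); elim: s p p' => // s IH p p' /ltnSE sps p0 sqf dv.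
have [p1|/exists_irredp_dvd[q irq qp]] := leqP (size p) 1.
  have : size p == 1%N by rewrite eqn_leq p1 size_poly_gt0.
  by rewrite size_poly_eq1 => /eqp_dvdl ->; rewrite dvd1p.
case/dvdpP: qp (dv q irq qp) => p1 Ep /dvdpP[p2 Ep'].
have q0 := irredp_neq0 irq.
have p10 : p1 != 0 by apply: contra_neq p0; rewrite Ep => ->; rewrite mul0r.
have ltp1 : (size p1 < s)%N.
  apply: leq_trans sps; rewrite Ep size_mul // -subn1 -addnBA ?size_poly_gt0 //.
  by rewrite -[X in (X < _)%N]addn0 ltn_add2l subn_gt0; case: irq.
rewrite Ep Ep' dvdp_mul2r // (IH _ _ ltp1) // => [r irr | r irr rp1].
  by apply: contra (sqf r irr); rewrite Ep => /dvdp_mulr->.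
have : r %| p2 * q by rewrite -Ep' dv // Ep dvdp_mulr.
have [co|nco] := boolP (coprimep r q); first by rewrite Gauss_dvdpl.
have rq := irq r (irredp_size_neq1 irr) (irredp_dvd_of_not_coprime irr nco).
by move: (sqf q irq); rewrite Ep expr2 dvdp_mul2r // -(eqp_dvdl _ rq) rp1.
Qed.

Lemma monic_squarefree_eq p p' : p \is monic -> p' \is monic ->
  (forall q, irreducible_poly q -> ~~ (q ^+ 2 %| p)) ->
  (forall q, irreducible_poly q -> ~~ (q ^+ 2 %| p')) ->
  (forall q, q \is monic -> irreducible_poly q -> (q %| p) = (q %| p')) -> p = p'.
Proof.
move=> mp mp' sqf sqf' same.
have {}same q : irreducible_poly q -> (q %| p) = (q %| p').
  by case/monic_irredp_assoc => m mm [irm mq]; rewrite -!(eqp_dvdl _ mq) same.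
apply/eqP; rewrite -eqp_monic // /eqp.
by rewrite !dvdp_squarefree ?monic_neq0 // => q irq; rewrite same.
Qed.
End IrreducibleFactors.

(* Psi_n := F_n / prod_(1 < d < n, d | n) Psi_d, written with explicit fuel f so that
   the recursion over the divisors d < n is structural; psi_fuel_enough shows any
   fuel f > n gives the same value. *)
Fixpoint psi_fuel (f n : nat) : {poly rat} :=
  if f is f'.+1 then fibp n %/ \prod_(d < n | (1 < d)%N && (d %| n)%N) psi_fuel f' d else 0.

Definition psi n := psi_fuel n.+1 n.

Definition psi_proper n := \prod_(d < n | (1 < d)%N && (d %| n)%N) psi d.

Definition psi_divisors n := \prod_(d < n.+1 | (1 < d)%N && (d %| n)%N) psi d.

Lemma psi_fuel_enough f g n : (n < f)%N -> (n < g)%N -> psi_fuel f n = psi_fuel g n.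
Proof.
elim: f g n => [//|f IH] [//|g] n /= nf ng; congr (_ %/ _).
by apply: eq_bigr => d _; apply: IH; apply: leq_trans (ltn_ord d) _.
Qed.

Lemma psiE n : psi n = fibp n %/ psi_proper n.
Proof.
by rewrite /psi /= /psi_proper; congr (_ %/ _); apply: eq_bigr => d _; exact: psi_fuel_enough.
Qed.

Lemma psi_divisorsE n : (1 < n)%N -> psi_divisors n = psi n * psi_proper n.
Proof.
move=> n1; rewrite /psi_divisors /psi_proper big_mkcond big_ord_recr /= n1 dvdnn.
by rewrite mulrC -big_mkcond.
Qed.

Lemma psi_divisors1 : psi_divisors 1 = 1.
Proof. by rewrite /psi_divisors big1 // => -[[|[|d]] //]. Qed.

Lemma dvdp_prod_subset (R : idomainType) (I : finType) (A B : pred I) (G : I -> {poly R}) :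
  (forall i, A i -> B i) -> \prod_(i | A i) G i %| \prod_(i | B i) G i.
Proof.
move=> AB; rewrite (bigID A B) /= (eq_bigl A) ?dvdp_mulIl // => i.
by case: (boolP (A i)) => [/AB ->|]; rewrite ?andbF.
Qed.

Lemma dvdp_psi_divisors g n : (g %| n)%N -> (g < n)%N -> psi_divisors g %| psi_proper n.
Proof.
move=> gn gltn; rewrite /psi_divisors /psi_proper.
rewrite (big_ord_widen_cond _ (fun d => (1 < d)%N && (d %| g)%N) (fun d => psi d) gltn).
apply: dvdp_prod_subset => i /andP[/andP[-> ig] _].
exact: dvdn_trans ig gn.
Qed.

(* Induction invariant: F_d = prod_(1 < e | d) Psi_e for all 0 < d <= m. *)
Definition fibp_factored m := forall d, (0 < d <= m)%N -> fibp d = psi_divisors d.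

Lemma fibp_factored_le m m' : (m' <= m)%N -> fibp_factored m -> fibp_factored m'.
Proof. by move=> le H d /andP[d0 dm]; rewrite H // d0 (leq_trans dm). Qed.

Lemma dvdp_psi_fibp_of d : fibp_factored d -> (1 < d)%N -> psi d %| fibp d.
Proof.
by move=> H d1; rewrite H ?psi_divisorsE ?dvdp_mulIl // (ltnW d1) leqnn.
Qed.

(* Psi_n is coprime to F_k for 0 < k < n: a common divisor divides F_(gcd n k),
   hence the proper product, so its square divides the squarefree F_n. *)
Lemma coprimep_psi_fibp_of n k : (1 < n)%N -> fibp_factored n ->
  (0 < k < n)%N -> coprimep (psi n) (fibp k).
Proof.
move=> n1 H /andP[k0 kn]; apply/coprimepP => d dpsi dF.
have n0 : (0 < n)%N by apply: ltnW.
have Fn : fibp n = psi n * psi_proper n by rewrite H ?n0 ?leqnn ?psi_divisorsE.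
have g0 : (0 < gcdn n k)%N by rewrite gcdn_gt0 n0.
have gltn : (gcdn n k < n)%N := leq_ltn_trans (dvdn_leq k0 (dvdn_gcdr n k)) kn.
have dFg : d %| fibp (gcdn n k) by apply: dvdp_fibp_gcd dF; rewrite Fn dvdp_mulr.
have dproper : d %| psi_proper n.
  by apply: dvdp_trans (dvdp_psi_divisors (dvdn_gcdl n k) gltn); rewrite -H // g0 ltnW.
have : d * d %| fibp n by rewrite Fn dvdp_mul.
by move/(separable_coprime (separable_fibp n0)); rewrite coprimepp size_poly_eq1.
Qed.

(* The proper product divides F_n: its factors are pairwise coprime divisors of F_n. *)
Lemma dvdp_psi_proper n : (1 < n)%N -> fibp_factored n.-1 -> psi_proper n %| fibp n.
Proof.
move=> n1 H.
have Hlt d : (d < n)%N -> fibp_factored d.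
  by move=> dn; apply: fibp_factored_le H; rewrite -ltnS prednK // ltnW.
suff /(_ n (leqnn n)) : forall m, (m <= n)%N ->
  \prod_(d < m | (1 < d)%N && (d %| n)%N) psi d %| fibp n by [].
elim=> [|m IH] mn; first by rewrite big_ord0 dvd1p.
rewrite big_mkcond big_ord_recr /= -big_mkcond.
case: ifP => [/andP[m1 mdn]|_]; last by rewrite mulr1 IH // ltnW.
have co : coprimep (psi m) (\prod_(d < m | (1 < d)%N && (d %| n)%N) psi d).
  apply: (big_ind (coprimep (psi m))) => [|p q|i /andP[i1 _]]; first exact: coprimep1.
    by rewrite coprimepMr => -> ->.
  apply: coprimep_dvdl (dvdp_psi_fibp_of (Hlt i _) i1) _; first exact: ltn_trans mn.
  by apply: coprimep_psi_fibp_of => //; [exact: Hlt | rewrite (ltnW i1) ltn_ord].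
rewrite mulrC Gauss_dvdp // IH ?(ltnW mn) // andbT.
exact: dvdp_trans (dvdp_psi_fibp_of (Hlt m mn) m1) (dvdp_fibp mdn).
Qed.

Lemma fibp_factorization n : (0 < n)%N -> fibp n = psi_divisors n.
Proof.
elim/ltn_ind: n => -[//|[|n]] IH _; first by rewrite psi_divisors1 fibp1.
have H : fibp_factored n.+1 by move=> d /andP[d0 dn]; apply: IH.
by rewrite psi_divisorsE // psiE divpK // dvdp_psi_proper.
Qed.

Lemma psi_factor n : (1 < n)%N -> fibp n = psi n * psi_proper n.
Proof. by move=> n1; rewrite fibp_factorization ?psi_divisorsE // ltnW. Qed.

Lemma fibp_factored_all m : fibp_factored m.
Proof. by move=> d /andP[d0 _]; exact: fibp_factorization. Qed.

Lemma dvdp_psi_fibp n : (1 < n)%N -> psi n %| fibp n.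
Proof. by move=> n1; rewrite psi_factor // dvdp_mulIl. Qed.

Lemma coprimep_psi_fibp n k : (1 < n)%N -> (0 < k < n)%N -> coprimep (psi n) (fibp k).
Proof. by move=> n1; apply: coprimep_psi_fibp_of; last exact: fibp_factored_all. Qed.

(* Psi_n is monic, as the quotient of the monic F_n by a product of monic Psi_d. *)
Lemma monic_psi n : (1 < n)%N -> psi n \is monic.
Proof.
elim/ltn_ind: n => n IH n1.
have proper_monic : psi_proper n \is monic.
  by apply: monic_prod => i /andP[i1 _]; apply: IH.
by move: (monic_fibp (ltnW n1)); rewrite psi_factor // monicMr.
Qed.

Lemma psi_fibotomic n : (1 < n)%N -> is_fibotomic n (psi n).
Proof.
move=> n1; split; first exact: monic_psi.
  move=> q irq; apply/negP => q2.
  have := separable_nosquare (separable_fibp (ltnW n1)) (ltnSn 1) (irredp_size_neq1 irq).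
  by rewrite (dvdp_trans q2) ?dvdp_psi_fibp.
move=> q _ irq; apply/idP/idP.
  move=> qpsi; rewrite (dvdp_trans qpsi (dvdp_psi_fibp n1)) /=.
  apply/forallP => k; apply/implyP => k0; apply: contraTN (irredp_size_neq1 irq) => qF.
  have /coprimepP/(_ q qpsi qF) : coprimep (psi n) (fibp k).
    by apply: coprimep_psi_fibp; rewrite ?k0 ?ltn_ord.
  by rewrite negbK size_poly_eq1.
case/andP => qF /forallP notF; rewrite psi_factor // in qF.
have [co|] := boolP (coprimep q (psi n)); last exact: irredp_dvd_of_not_coprime.
have : coprimep q (psi_proper n).
  apply: (big_ind (coprimep q)) => [|x y cx cy|i /andP[i1 _]]; first exact: coprimep1.
    by rewrite coprimepMr cx cy.
  apply: contraNT (implyP (notF i) (ltnW i1)) => nco.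
  exact: dvdp_trans (irredp_dvd_of_not_coprime irq nco) (dvdp_psi_fibp i1).
move/coprimepP/(_ q (dvdpp q)); rewrite -(Gauss_dvdpr _ co) => /(_ qF).
by rewrite -size_poly_eq1 (negPf (irredp_size_neq1 irq)).
Qed.

Lemma fibotomic_psi n p : (1 < n)%N -> is_fibotomic n p -> p = psi n.
Proof.
move=> n1 [mp sqp dp]; have [mpsi sqpsi dpsi] := psi_fibotomic n1.
by apply: monic_squarefree_eq => // q mq irq; rewrite dp // dpsi.
Qed.

Lemma big_divisors_split1 (T : Type) (idx : T) (op : Monoid.com_law idx) (F : nat -> T) n :
  (0 < n)%N ->
  \big[op/idx]_(d < n.+1 | (d %| n)%N) F d =
  op (F 1%N) (\big[op/idx]_(d < n.+1 | (1 < d)%N && (d %| n)%N) F d).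
Proof.
move=> n0; have i1 : (1 < n.+1)%N by rewrite ltnS.
rewrite (bigD1 (Ordinal i1)) ?dvd1n //=; congr (op _ _); apply: eq_bigl => -[[|[|i]] /= _].
- by rewrite dvd0n eqn0Ngt n0.
- by rewrite andbF.
- by rewrite andbT.
Qed.

Lemma big_divisors_ord (T : Type) (idx : T) (op : Monoid.com_law idx) (F : nat -> T) n :
  (0 < n)%N ->
  \big[op/idx]_(d <- divisors n) F d = \big[op/idx]_(d < n.+1 | (d %| n)%N) F d.
Proof.
move=> n0; rewrite -(big_mkord (fun d => d %| n)%N) -[RHS]big_filter.
apply: perm_big (uniq_perm _ _ _); rewrite ?divisors_uniq ?filter_uniq ?iota_uniq // => d.
rewrite mem_filter mem_index_iota -dvdn_divisors //.
by case: (boolP (d %| n)%N) => //= dn; rewrite ltnS dvdn_leq.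
Qed.

Lemma Phi1 : 'Phi_1 = 'X - 1.
Proof. by have := prod_Cyclotomic (ltn0Sn 0); rewrite (_ : divisors 1 = [:: 1%N]) // big_seq1. Qed.

Lemma sum_totient_nontrivial n : (0 < n)%N ->
  (\sum_(d < n.+1 | (1 < d) && (d %| n)) totient d)%N = n.-1.
Proof.
move=> n0; have := sum_totient_dvd n; rewrite (big_divisors_split1 _ _ n0) => E.
by rewrite -[in RHS]E.
Qed.

Lemma poly_eq0_off0 (R : numDomainType) (p : {poly R}) :
  (forall w, w != 0 -> p.[w] = 0) -> p = 0.
Proof.
move=> p0; apply: (@roots_geq_poly_eq0 _ p [seq i.+1%:R | i <- iota 0 (size p)]).
- by apply/allP => _ /mapP[i _ ->]; apply/eqP/p0; rewrite pnatr_eq0.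
- by rewrite map_inj_uniq ?iota_uniq // => i j /eqP; rewrite eqr_nat => /eqP[].
- by rewrite size_map size_iota.
Qed.

Section Evaluation.
Variable R : rcfType.
Implicit Types (w x : R).

Definition ev (p : {poly rat}) x := (map_poly (ratr : rat -> R) p).[x].

Lemma evM (p q : {poly rat}) x : ev (p * q) x = ev p x * ev q x.
Proof. by rewrite /ev rmorphM hornerM. Qed.

Lemma ev_prod (I : finType) (P : pred I) (F : I -> {poly rat}) x :
  ev (\prod_(i | P i) F i) x = \prod_(i | P i) ev (F i) x.
Proof. by rewrite /ev rmorph_prod horner_prod. Qed.

Definition psi_value n w : R :=
  (if n == 2%N then -1 else 1) * ((map_poly intr 'Phi_n).[- w ^+ 2] / w ^+ totient n).

Lemma omega_spec x : let w := (x + Num.sqrt (x ^+ 2 + 4)) / 2 in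
  0 < w /\ w - w^-1 = x.
Proof.
move=> w; set s := Num.sqrt (x ^+ 2 + 4).
have s0 : 0 <= s := sqrtr_ge0 _.
have s2 : s ^+ 2 = x ^+ 2 + 4 by rewrite sqr_sqrtr // addr_ge0 ?sqr_ge0.
have w0 : 0 < w.
  suff xs : 0 < x + s by rewrite divr_gt0.
  rewrite ltNge; apply/negP => xs.
  have : 0 <= (- x - s) * s by apply: mulr_ge0 => //; lra.
  nra.
have e : w * (w - x) = 1.
  rewrite /w -/s; transitivity ((s ^+ 2 - x ^+ 2) / 4); first by field.
  by rewrite s2; field.
have wi : w^-1 = w - x by rewrite -[RHS](mulKf (lt0r_neq0 w0)) e mulr1.
by split=> //; rewrite wi; ring.
Qed.

Lemma ev_fibp_binet n w : w != 0 ->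
  ev (fibp n) (w - w^-1) * (w + w^-1) = w ^+ n - (- w^-1) ^+ n.
Proof.
move=> w0; pose binet k := ev (fibp k) (w - w^-1) * (w + w^-1) = w ^+ k - (- w^-1) ^+ k.
suff /(_ n)[] : forall k, binet k /\ binet k.+1 by [].
elim=> [|k [IH1 IH2]].
  by rewrite /binet /ev fibp0 fibp1 rmorph0 rmorph1 horner0 hornerC; split; field.
split=> //; rewrite /binet /ev fibpSS rmorphD rmorphM /= map_polyX hornerD hornerM hornerX.
by rewrite mulrDl -mulrA IH1 IH2 !exprS; field.
Qed.

Lemma cyclotomic_prod_nontrivial (y : R) n : (0 < n)%N ->
  (y - 1) * \prod_(d < n.+1 | (1 < d)%N && (d %| n)%N) (map_poly intr 'Phi_d).[y] = y ^+ n - 1.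
Proof.
move=> n0.
have E := big_divisors_ord (@GRing.mul R) (fun d => (map_poly intr 'Phi_d).[y]) n0.
rewrite -horner_prod -rmorph_prod prod_Cyclotomic // in E.
rewrite (big_divisors_split1 _ (fun d => (map_poly (intr : int -> R) 'Phi_d).[y]) n0) in E.
by rewrite Phi1 !rmorphB rmorph1 /= map_polyX map_polyXn !hornerE in E; rewrite E.
Qed.

Lemma sign_prod_nontrivial n : (0 < n)%N ->
  \prod_(d < n.+1 | (1 < d)%N && (d %| n)%N) (if val d == 2%N then -1 else 1 : R) =
  if odd n then 1 else -1.
Proof.
move=> n0; case: ifPn => [odd_n | even_n].
  apply: big1 => i /andP[_ idn]; case: eqP => // i2.
  by move: odd_n; rewrite -(divnK idn) i2 oddM andbF.
have i2 : (2 < n.+1)%N by rewrite ltnS; case: n n0 even_n => [|[|n]].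
rewrite (bigD1 (Ordinal i2)) /= ?dvdn2 ?even_n // big1 ?mulr1 // => i /andP[_].
by rewrite -(inj_eq val_inj) /= => /negPf ->.
Qed.

Lemma binet_cyclotomic n w : (0 < n)%N -> w != 0 ->
  (w ^+ n - (- w^-1) ^+ n) / (w + w^-1) =
  (if odd n then 1 else -1) * ((((- w ^+ 2) ^+ n - 1) / (- w ^+ 2 - 1)) / w ^+ n.-1).
Proof.
case: n => // m _ w0; have w21 : w ^+ 2 + 1 != 0 by rewrite lt0r_neq0 ?ltr_pwDr ?sqr_ge0.
rewrite (exprNn w^-1) (exprNn (w ^+ 2)) exprVn -signr_odd /=.
rewrite [(w ^+ 2) ^+ m.+1]exprS -exprM mulnC exprM [w ^+ m.+1]exprS.
have : w ^+ m != 0 by rewrite expf_neq0.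
move: (w ^+ m) => a a0; case: (odd m) => /=; rewrite ?expr0 ?expr1; field.
all: by rewrite a0 w0 -expr2 -opprD oppr_eq0 w21.
Qed.

Lemma fibp_value_prod n w : (0 < n)%N -> w != 0 ->
  ev (fibp n) (w - w^-1) = \prod_(d < n.+1 | (1 < d)%N && (d %| n)%N) psi_value d w.
Proof.
move=> n0 w0; have w21 : w ^+ 2 + 1 != 0 by rewrite lt0r_neq0 ?ltr_pwDr ?sqr_ge0.
have wiw : w + w^-1 != 0.
  by rewrite (_ : w + w^-1 = (w ^+ 2 + 1) / w) ?mulf_neq0 ?invr_eq0 //; field.
have y1 : - w ^+ 2 - 1 != 0 by rewrite -opprD oppr_eq0.
rewrite /psi_value big_split /= sign_prod_nontrivial // big_split /= prodfV prodrXr.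
rewrite sum_totient_nontrivial // -[ev _ _](mulfK wiw) ev_fibp_binet // binet_cyclotomic //.
by rewrite -(cyclotomic_prod_nontrivial _ n0) [_ * \prod_(_ < _ | _) _]mulrC mulfK.
Qed.

(* w^N A(w - w^-1) as a genuine polynomial in w (for size A <= N + 1). *)
Definition laurent_lift N (A : {poly rat}) : {poly R} :=
  \sum_(i < size A) (ratr A`_i : R) *: (('X ^+ 2 - 1) ^+ i * 'X ^+ (N - i)).

Lemma laurent_liftE N (A : {poly rat}) w : (size A <= N.+1)%N -> w != 0 ->
  (laurent_lift N A).[w] = w ^+ N * ev A (w - w^-1).
Proof.
move=> sA w0; rewrite /laurent_lift /ev horner_sum horner_coef size_map_poly mulr_sumr.
apply: eq_bigr => i _; rewrite coef_map hornerZ hornerM horner_exp hornerXn.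
have -> : ('X ^+ 2 - 1).[w] = (w - w^-1) * w by rewrite !hornerE; field.
have iN : (i <= N)%N by rewrite -ltnS (leq_trans (ltn_ord i) sA).
by rewrite -{2}(subnKC iN) exprD exprMn /=; ring.
Qed.

(* The lift of a nonzero polynomial is nonzero, since w - w^-1 takes every value. *)
Lemma laurent_lift_neq0 N (A : {poly rat}) :
  A != 0 -> (size A <= N.+1)%N -> laurent_lift N A != 0.
Proof.
move=> A0 sA; apply: contra_neq A0 => L0.
apply: (@map_poly_inj _ R ratr); rewrite rmorph0; apply: poly_eq0_off0 => x _.
have [/lt0r_neq0 w0 wx] := omega_spec x.
move: (laurent_liftE sA w0); rewrite L0 horner0 wx => /esym/eqP.
by rewrite mulf_eq0 expf_eq0 (negPf w0) andbF => /eqP.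
Qed.

(* Cancelling a nonzero factor B(w - w^-1) from an identity of Laurent expressions
   in w: both sides become polynomial in w after clearing powers of w. *)
Lemma ev_cancel (A B : {poly rat}) (U : {poly R}) k : B != 0 ->
  (forall w, w != 0 ->
     ev A (w - w^-1) * ev B (w - w^-1) = U.[w] / w ^+ k * ev B (w - w^-1)) ->
  forall w, w != 0 -> ev A (w - w^-1) = U.[w] / w ^+ k.
Proof.
move=> B0 eqAB; set N := size A; set M := size B.
pose D := laurent_lift N A * 'X ^+ k - U * 'X ^+ N.
have DE w : w != 0 -> D.[w] = w ^+ N * w ^+ k * (ev A (w - w^-1) - U.[w] / w ^+ k).
  move=> w0; rewrite /D !hornerE laurent_liftE //.
  by field; rewrite expf_neq0.
have : D * laurent_lift M B = 0.
  apply: poly_eq0_off0 => w w0; rewrite hornerM DE // laurent_liftE //.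
  set a := ev A _; set b := ev B _; set c := U.[w] / _.
  transitivity (w ^+ N * w ^+ k * w ^+ M * (a * b - c * b)); first by ring.
  by rewrite eqAB // subrr mulr0.
move/eqP; rewrite mulf_eq0 (negPf (laurent_lift_neq0 B0 _)) // orbF => /eqP D0 w w0.
apply/eqP; rewrite -subr_eq0; move/eqP: (DE w w0); rewrite D0 horner0 eq_sym.
by rewrite !mulf_eq0 !expf_eq0 (negPf w0) !andbF.
Qed.

(* psi_value as (polynomial in w) / w^phi(n), the shape required by ev_cancel. *)
Lemma psi_valueE n w : psi_value n w =
  ((if n == 2%N then -1 else 1) *: (map_poly intr 'Phi_n \Po (- 'X ^+ 2))).[w] / w ^+ totient n.
Proof. by rewrite /psi_value hornerZ horner_comp hornerN hornerXn mulrA. Qed.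

Lemma psi_value_eq n w : (1 < n)%N -> w != 0 -> ev (psi n) (w - w^-1) = psi_value n w.
Proof.
elim/ltn_ind: n w => n IH w n1 w0; rewrite psi_valueE.
apply: (ev_cancel (B := psi_proper n)) => // [|v v0].
  by apply: monic_neq0; apply: monic_prod => i /andP[i1 _]; apply: monic_psi.
rewrite -psi_valueE -evM -psi_factor // fibp_value_prod ?(ltnW n1) //.
rewrite big_mkcond big_ord_recr /= n1 dvdnn /= mulrC -big_mkcond /psi_proper ev_prod.
by congr (_ * _); apply: eq_bigr => i /andP[i1 _]; rewrite IH.
Qed.
End Evaluation.

Theorem mainTheorem4 (n : nat) (hn : (2 <= n)%N) :
  (exists p : {poly rat}, is_fibotomic n p) /\
  forall (p : {poly rat}), is_fibotomic n p ->
  forall (R : rcfType) (x : R),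
    let w := (x + Num.sqrt (x ^+ 2 + 4)) / 2 in
    (map_poly ratr p).[x] =
      (if n == 2%N then -1 else 1) *
      ((map_poly intr 'Phi_n).[- w ^+ 2] / w ^+ totient n).
Proof.
split=> [|p fib_p R x w]; first by exists (psi n); exact: psi_fibotomic.
have [w_gt0 wx] : 0 < w /\ w - w^-1 = x := omega_spec x.
rewrite (fibotomic_psi hn fib_p) -[in LHS]wx.
exact: psi_value_eq hn (lt0r_neq0 w_gt0).
Qed.
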